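(* Let $(r(k))_{k\ge 0}$ be arbitrary elements of a commutative ring, and define $b(n,k)$ for integers $n\ge 0$, $k\ge -1$ by $b(0,k)=[k=0]$, $b(n,-1)=0$, and for $n>0$, $k\ge0$, $b(n,k)=b(n-1,k-1)+r(k)\,b(n-1,k+1)$. Then for every integer $n\ge 0$, $$\sum_{k=0}^{n}(-1)^k\, b(2n,2k)\prod_{j=0}^{k-1} r(2j)=[n=0].$$
   Context: $[P]$ denotes the Iverson bracket. An empty product equals $1$. *)

From HB Require Import structures.
From mathcomp Require Import all_boot all_order all_algebra.
Set Implicit Arguments. Unset Strict Implicit. Unset Printing Implicit Defensive.
Import GRing.Theory.
Local Open Scope ring_scope.

(* bcoef r n k = b(n,k) for k >= 0; the value b(n,-1) = 0 is built into the
   k = 0 branch: b(n+1,0) = b(n,-1) + r(0) b(n,1) = r(0) b(n,1). *)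
Fixpoint bcoef (R : comPzRingType) (r : nat -> R) (n : nat) : nat -> R :=
  match n with
  | 0 => fun k => (k == 0)%:R
  | n'.+1 => fun k => match k with
                      | 0 => r 0 * bcoef r n' 1
                      | k'.+1 => bcoef r n' k' + r k'.+1 * bcoef r n' k'.+2
                      end
  end.

(* Pair b(N, .) with a weight sequence f: unfolding one step of the recurrence
   turns sum_k b(N+1,k) f(k) into sum_k b(N,k) (f(k+1) + r(k-1) f(k-1)).  The
   weights w(2k) = (-1)^k r(0) r(2) ... r(2k-2), w(2k+1) = 0 are annihilated by
   this adjoint operator, so sum_k b(N,k) w(k) vanishes for N > 0, while for
   N = 0 it is w(0) = 1.  The sum in the theorem is exactly this pairing with
   N = 2n, since b(2n, .) is only paired with even indices. *)
From mathcomp Require Import all_boot all_order all_algebra.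
Import GRing.Theory.
Local Open Scope ring_scope.

Section Pairing.

Context {R : comPzRingType} (r : nat -> R).

Lemma bcoef_gt (N k : nat) : (N < k)%N -> bcoef r N k = 0.
Proof.
elim: N k => [|N IHN] [|k] //= ltNk.
by rewrite !IHN ?mulr0 ?addr0 //; exact: leqW (ltnW ltNk).
Qed.

Definition bcoef_adj (f : nat -> R) (k : nat) : R :=
  f k.+1 + (if k is k'.+1 then r k' * f k' else 0).

Lemma sum_bcoefS (N M : nat) (f : nat -> R) : (N.+1 < M)%N ->
  \sum_(0 <= k < M) bcoef r N.+1 k * f k
  = \sum_(0 <= k < M) bcoef r N k * bcoef_adj f k.
Proof.
case: M => [//|M] ltNM.
have bN0 k : (N < k)%N -> bcoef r N k = 0 by exact: bcoef_gt.
rewrite big_nat_recl //=.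
under eq_big_nat => k _ do rewrite mulrDl.
rewrite big_split /= addrCA.
under [in RHS]eq_big_nat => k _ do rewrite mulrDr.
rewrite big_split /=; congr (_ + _).
  by rewrite [in RHS]big_nat_recr //= bN0 ?mul0r ?addr0.
rewrite [in RHS]big_nat_recl //= mulr0 add0r.
rewrite -(big_nat_recl _ _ (fun i => r i * bcoef r N i.+1 * f i)) //.
rewrite big_nat_recr //= bN0 ?mulr0 ?mul0r ?addr0; last exact: ltnW.
by apply: eq_big_nat => k _; rewrite mulrCA mulrA.
Qed.

Lemma sum_bcoef_adj_kernel (N M : nat) (f : nat -> R) :
  (forall k, bcoef_adj f k = 0) -> (N < M)%N ->
  \sum_(0 <= k < M) bcoef r N k * f k = (N == 0)%:R * f 0.
Proof.
move=> adj_f0; case: N => [|N] ltNM.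
  case: M ltNM => [//|M] _; rewrite big_nat_recl //= mul1r big1 ?addr0 //.
  by move=> k _; rewrite mul0r.
by rewrite sum_bcoefS // big1 ?mul0r // => k _; rewrite adj_f0 mulr0.
Qed.

Fixpoint alt_weight (k : nat) : R :=
  match k with
  | 0 => 1
  | 1 => 0
  | k'.+2 => - r k' * alt_weight k'
  end.

Lemma alt_weightSS (k : nat) : alt_weight k.+2 = - r k * alt_weight k.
Proof. by []. Qed.

Lemma bcoef_adj_alt_weight (k : nat) : bcoef_adj alt_weight k = 0.
Proof. by case: k => [|k]; rewrite /bcoef_adj /= ?addr0 // mulNr addNr. Qed.

Lemma alt_weight_odd (k : nat) : alt_weight (2 * k).+1 = 0.
Proof. by elim: k => [//|k IHk]; rewrite mulnS add2n alt_weightSS IHk mulr0. Qed.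

Lemma alt_weight_even (k : nat) :
  alt_weight (2 * k) = (-1) ^+ k * \prod_(0 <= j < k) r (2 * j).
Proof.
elim: k => [|k IHk]; first by rewrite big_geq ?mulr1.
rewrite mulnS add2n alt_weightSS IHk big_nat_recr //= exprS mulN1r !mulNr.
by rewrite mulrCA [r _ * _]mulrC.
Qed.

End Pairing.

Lemma sum_nat_double (R : nmodType) (m : nat) (F : nat -> R) :
  \sum_(0 <= h < 2 * m) F h = \sum_(0 <= k < m) (F (2 * k)%N + F (2 * k).+1).
Proof.
elim: m => [|m IHm]; first by rewrite !big_geq.
by rewrite mulnS add2n !big_nat_recr //= IHm addrA.
Qed.

Theorem lemma2 (R : comPzRingType) (r : nat -> R) (n : nat) :
  \sum_(0 <= k < n.+1)
     (-1) ^+ k * bcoef r (2 * n)%N (2 * k)%N * \prod_(0 <= j < k) r (2 * j)%N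
  = (n == 0%N)%:R.
Proof.
have -> : \sum_(0 <= k < n.+1)
    (-1) ^+ k * bcoef r (2 * n) (2 * k) * \prod_(0 <= j < k) r (2 * j)
  = \sum_(0 <= h < 2 * n.+1) bcoef r (2 * n) h * alt_weight r h.
  rewrite sum_nat_double; apply: eq_big_nat => k _.
  by rewrite alt_weight_odd alt_weight_even mulr0 addr0 mulrCA mulrA.
rewrite sum_bcoef_adj_kernel.
- by rewrite muln_eq0 /= mulr1.
- exact: bcoef_adj_alt_weight.
- by rewrite mulnS add2n ltnS ltnW.
Qed.
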